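(* For real $0\le x<1$ and every integer $r\ge2$, $$\log\mathcal C_r\left(\frac x2\right)=-\frac{1}{2^r}\int_0^x \pi t^{r-1}\tan\left(\frac{\pi t}{2}\right)dt.$$
   Context: For an integer $r\ge2$ let $P_r(y)=(1-y)\exp\left(y+\frac{y^2}{2}+\cdots+\frac{y^r}{r}\right)$. For real $|x|<\tfrac12$, the Kurokawa–Koyama multiple cosine function of order $r$ is the convergent positive product $\mathcal C_r(x)=\prod_{n\ge1,\ n\text{ odd}}\left\{P_r\left(\frac{x}{n/2}\right)P_r\left(-\frac{x}{n/2}\right)^{(-1)^{r-1}}\right\}^{(n/2)^{r-1}}$, and $\log$ denotes the real logarithm. *)

From Stdlib Require Import Reals.
From Coquelicot Require Import Coquelicot.
Open Scope R_scope.

Definition Pr (r : nat) (y : R) : R :=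
  (1 - y) * exp (sum_f_R0 (fun j => y ^ (j + 1) / INR (j + 1)) (r - 1)).

(* The bases are positive for |x| < 1/2, so Rpower is the usual real power. *)
Definition Cfactor (r : nat) (x : R) (k : nat) : R :=
  let h := INR (2 * k + 1) / 2 in
  Rpower (Pr r (x / h) * Rpower (Pr r (- (x / h))) ((-1) ^ (r - 1))) (h ^ (r - 1)).

Fixpoint Cpartial (r : nat) (x : R) (N : nat) : R :=
  match N with
  | O => 1
  | S N' => Cpartial r x N' * Cfactor r x N'
  end.

Definition Ccos (r : nat) (x : R) : R := real (Lim_seq (Cpartial r x)).

(* Write m = r - 1 and n = 2k + 1.  The logarithm of the k-th factor of the product
   defining C_r(x/2) vanishes at x = 0, and since the truncated logarithmic series in P_r
   cancels all but the top power of the geometric series, its derivative is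
   -(x^m / 2^r) * 4x / (n^2 - x^2).  Summing over k produces -(x^m / 2^r) times the
   partial fractions of pi tan(pi x / 2), whose N-th partial sum is within 1/N of the
   limit uniformly on [0, 1); so the partial logarithms converge to the integral.

   The error bound for the partial fractions comes from Herglotz' dyadic formula
   cot u = 2^-s sum_(j < 2^s) cot ((u + j pi) / 2^s): pairing the terms j and 2^s - j,
   each cot v is replaced by 1/v at a cost controlled by the 1-Lipschitz function
   1/v - cot v on (0, pi/2]. *)

From Stdlib Require Import Reals Lra Lia.
From Coquelicot Require Import Coquelicot.
Open Scope R_scope.

Fixpoint sumN (f : nat -> R) (n : nat) : R :=
  match n with O => 0 | S n => sumN f n + f n end.

Lemma sumN_S f n : sumN f (S n) = sumN f n + f n.
Proof. reflexivity. Qed.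

Lemma sumN_ext f g n : (forall i, (i < n)%nat -> f i = g i) -> sumN f n = sumN g n.
Proof. induction n as [|n IH]; simpl; intros H; auto. rewrite IH, H; auto. Qed.

Lemma sumN_plus f g n : sumN (fun i => f i + g i) n = sumN f n + sumN g n.
Proof. induction n as [|n IH]; simpl; [ring|rewrite IH; ring]. Qed.

Lemma sumN_scal c f n : sumN (fun i => c * f i) n = c * sumN f n.
Proof. induction n as [|n IH]; simpl; [ring|rewrite IH; ring]. Qed.

Lemma sumN_const c n : sumN (fun _ => c) n = INR n * c.
Proof. induction n as [|n IH]; simpl sumN; [simpl; ring|rewrite IH, S_INR; ring]. Qed.

Lemma sumN_shift f n : sumN f (S n) = f O + sumN (fun i => f (S i)) n.
Proof. induction n as [|n IH]; simpl in *; [ring|rewrite IH; ring]. Qed.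

Lemma sumN_split f a b : sumN f (a + b) = sumN f a + sumN (fun i => f (a + i)%nat) b.
Proof.
  induction b as [|b IH]; simpl; [rewrite Nat.add_0_r; ring|].
  rewrite Nat.add_succ_r; simpl; rewrite IH; ring.
Qed.

Lemma sumN_rev f n : sumN f n = sumN (fun i => f (n - 1 - i)%nat) n.
Proof.
  induction n as [|n IH]; [reflexivity|].
  rewrite (sumN_shift (fun i => f (S n - 1 - i)%nat)); simpl sumN at 1.
  rewrite IH, Rplus_comm, Nat.sub_0_r, Nat.sub_succ, Nat.sub_0_r.
  f_equal; apply sumN_ext; intros i Hi; f_equal; lia.
Qed.

Lemma sumN_le f g n : (forall i, (i < n)%nat -> f i <= g i) -> sumN f n <= sumN g n.
Proof.
  induction n as [|n IH]; simpl; intros H; [lra|].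
  apply Rplus_le_compat; auto.
Qed.

Lemma Rabs_sumN f n : Rabs (sumN f n) <= sumN (fun i => Rabs (f i)) n.
Proof.
  induction n as [|n IH]; simpl; [rewrite Rabs_R0; lra|].
  eapply Rle_trans; [apply Rabs_triang|lra].
Qed.

Lemma is_RInt_sumN (f : nat -> R -> R) (I : nat -> R) a b N :
  (forall k, (k < N)%nat -> is_RInt (f k) a b (I k)) ->
  is_RInt (fun t => sumN (fun k => f k t) N) a b (sumN I N).
Proof.
  induction N as [|N IH]; intros HI; simpl.
  - pose proof (is_RInt_const a b 0) as H0.
    change (scal (b - a) 0) with ((b - a) * 0) in H0. rewrite Rmult_0_r in H0. exact H0.
  - apply (is_RInt_plus (fun t => sumN (fun k => f k t) N) (f N)); auto.
Qed.

Lemma is_lim_seq_inv_rate (u : nat -> R) (l K : R) :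
  (forall N, (1 <= N)%nat -> Rabs (u N - l) <= K / INR N) -> is_lim_seq u l.
Proof.
  intros Hu.
  assert (Hinv : is_lim_seq (fun N => K / INR N) 0).
  { replace (Finite 0) with (Rbar_mult K (Rbar_inv p_infty)) by (simpl; f_equal; ring).
    apply is_lim_seq_scal_l, is_lim_seq_inv; [apply is_lim_seq_INR|discriminate]. }
  apply (is_lim_seq_le_le_loc (fun N => l - K / INR N) _ (fun N => l + K / INR N)).
  - exists 1%nat; intros N HN. specialize (Hu N HN). apply Rabs_le_between' in Hu. lra.
  - replace (Finite l) with (Rbar_minus l 0) by (simpl; f_equal; ring).
    apply is_lim_seq_minus'; [apply is_lim_seq_const|exact Hinv].
  - replace (Finite l) with (Rbar_plus l 0) by (simpl; f_equal; ring).
    apply is_lim_seq_plus'; [apply is_lim_seq_const|exact Hinv].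
Qed.

Lemma is_lim_seq_RInt_uniform (f : nat -> R -> R) (g : R -> R) (u : nat -> R) (a b K : R) :
  a <= b -> ex_RInt g a b -> (forall N, is_RInt (f N) a b (u N)) ->
  (forall N t, (1 <= N)%nat -> a <= t <= b -> Rabs (f N t - g t) <= K / INR N) ->
  is_lim_seq u (RInt g a b).
Proof.
  intros Hab Hg Hf Hfg. apply (is_lim_seq_inv_rate _ _ ((b - a) * K)). intros N HN.
  pose proof (is_RInt_minus _ _ a b _ _ (Hf N) (RInt_correct g a b Hg)) as Hd.
  replace (u N - RInt g a b) with (RInt (fun t => f N t - g t) a b)
    by exact (is_RInt_unique _ _ _ _ Hd).
  unfold Rdiv; rewrite Rmult_assoc.
  apply abs_RInt_le_const; [exact Hab|eexists; exact Hd|].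
  intros t Ht. apply (Hfg N t HN Ht).
Qed.

Lemma PI_le_334 : PI <= 334 / 100.
Proof. destruct (PI_ineq 2) as [_ H]; unfold tg_alt, PI_tg in H; simpl in H; lra. Qed.

Lemma sin_cubic_bounds u : 0 <= u <= PI -> u - u ^ 3 / 6 <= sin u <= u.
Proof.
  intros Hu. pose proof PI_le_334.
  split.
  - destruct (SIN u) as [Hlb _]; try lra.
    unfold sin_lb, sin_approx, sin_term in Hlb.
    cbn [sum_f_R0 Nat.mul Nat.add] in Hlb; rewrite !INR_IZR_INZ in Hlb; simpl in Hlb.
    assert (0 <= u ^ 5 * (42 - u ^ 2)) by (apply Rmult_le_pos; [apply pow_le|]; nra).
    nra.
  - destruct (Req_dec u 0) as [->|Hu0]; [rewrite sin_0; lra|].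
    left; apply sin_lt_x; lra.
Qed.

Definition cot (u : R) : R := cos u / sin u.

Definition cot_defect (u : R) : R := / u - cot u.

Lemma cot_defect_derive u :
  0 < u <= PI / 2 -> is_derive cot_defect u (/ sin u ^ 2 - / u ^ 2).
Proof.
  intros Hu. assert (0 < sin u) by (apply sin_gt_0; pose proof PI_RGT_0; lra).
  unfold cot_defect, cot. auto_derive.
  - repeat split; lra.
  - pose proof (sin2_cos2 u) as K; unfold Rsqr in K.
    field_simplify_eq; [nra|lra].
Qed.

(* From [u - u^3/6 <= sin u]: [u^2 - sin^2 u <= u^2 sin^2 u] reduces to
   [(u^2 - 3) (u^2 - 8) >= 0], true for [u^2 <= 3]. *)
Lemma cot_defect_derive_bounds u :
  0 < u <= PI / 2 -> 0 <= / sin u ^ 2 - / u ^ 2 <= 1.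
Proof.
  intros Hu. pose proof PI_le_334.
  destruct (sin_cubic_bounds u) as [Hlb Hub]; [lra|].
  assert (Hs : 0 < sin u) by (apply sin_gt_0; lra).
  set (s := sin u) in *.
  assert (E : / s ^ 2 - / u ^ 2 = (u ^ 2 - s ^ 2) / (s ^ 2 * u ^ 2)) by (field; lra).
  assert (Hsu : 0 < s ^ 2 * u ^ 2) by (apply Rmult_lt_0_compat; nra).
  rewrite E; split; [apply Rdiv_le_0_compat; nra|].
  apply Rmult_le_reg_r with (s ^ 2 * u ^ 2); [lra|].
  unfold Rdiv; rewrite Rmult_assoc, Rinv_l, Rmult_1_r, Rmult_1_l by lra.
  assert (u ^ 2 <= 3) by nra.
  assert (0 <= u - u ^ 3 / 6) by nra.
  assert (s ^ 2 >= (u - u ^ 3 / 6) ^ 2) by nra.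
  assert (0 <= u ^ 4 / 36 * ((u ^ 2 - 3) * (u ^ 2 - 8))) by (apply Rmult_le_pos; nra).
  nra.
Qed.

Lemma cot_defect_lipschitz_le a b :
  0 < a -> a <= b -> b <= PI / 2 -> Rabs (cot_defect b - cot_defect a) <= b - a.
Proof.
  intros Ha Hab Hb. destruct (Req_dec a b) as [<-|Hne].
  { rewrite Rminus_eq_0, Rabs_R0; lra. }
  destruct (MVT_cor2 cot_defect (fun c => / sin c ^ 2 - / c ^ 2) a b) as [c [Hc Hcab]];
    [lra| intros c Hc; apply is_derive_Reals, cot_defect_derive; lra|].
  rewrite Hc, Rabs_mult, (Rabs_right (b - a)) by lra.
  destruct (cot_defect_derive_bounds c) as [D0 D1]; [lra|].
  rewrite Rabs_right by lra. nra.
Qed.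

Lemma cot_defect_lipschitz a b :
  0 < a <= PI / 2 -> 0 < b <= PI / 2 ->
  Rabs (cot_defect a - cot_defect b) <= Rabs (a - b).
Proof.
  intros Ha Hb. destruct (Rle_dec a b).
  - rewrite Rabs_minus_sym, (Rabs_minus_sym a), (Rabs_right (b - a)) by lra.
    apply cot_defect_lipschitz_le; lra.
  - rewrite (Rabs_right (a - b)) by lra. apply cot_defect_lipschitz_le; lra.
Qed.

Lemma cot_defect_bound w : 0 < w <= PI / 4 -> Rabs (cot_defect w) <= 2.
Proof.
  intros Hw. pose proof PI2_3_2. pose proof PI_le_334.
  assert (Hq : cot_defect (PI / 4) = 4 / PI - 1).
  { unfold cot_defect, cot. rewrite sin_PI4, cos_PI4.
    field; split; [lra|apply Rgt_not_eq, sqrt_lt_R0; lra]. }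
  assert (H4 : 1 <= 4 / PI <= 2).
  { split; apply Rmult_le_reg_r with PI; try lra;
      unfold Rdiv; rewrite Rmult_assoc, Rinv_l; lra. }
  pose proof (cot_defect_lipschitz w (PI / 4)) as L.
  replace (cot_defect w) with ((cot_defect w - cot_defect (PI / 4)) + cot_defect (PI / 4)) by ring.
  eapply Rle_trans; [apply Rabs_triang|].
  assert (Rabs (cot_defect w - cot_defect (PI / 4)) <= 1).
  { eapply Rle_trans; [apply L; lra|]. rewrite Rabs_left1; lra. }
  rewrite Hq in *; rewrite (Rabs_right (4 / PI - 1)) by lra; lra.
Qed.

Lemma cot_sub_PI2 u : cot (u - PI / 2) = - tan u.
Proof.
  unfold cot, tan. replace (u - PI / 2) with (- (PI / 2 - u)) by ring.
  rewrite cos_neg, sin_neg, cos_shift, sin_shift, Rdiv_opp_r; reflexivity.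
Qed.

Lemma cot_add_PI u : cot (u + PI) = cot u.
Proof. unfold cot. rewrite neg_cos, neg_sin, Rdiv_opp_l, Rdiv_opp_r; ring. Qed.

Lemma cot_PI2_sub u : cot (PI / 2 - u) = tan u.
Proof. unfold cot, tan. rewrite cos_shift, sin_shift; reflexivity. Qed.

Lemma cot_double u : 0 < u < PI -> cot u = (cot (u / 2) + cot ((u + PI) / 2)) / 2.
Proof.
  intros Hu. set (v := u / 2).
  assert (0 < sin v) by (apply sin_gt_0; unfold v; lra).
  assert (0 < cos v) by (apply cos_gt_0; unfold v; lra).
  replace u with (2 * v) by (unfold v; field).
  replace ((2 * v + PI) / 2) with (v + PI / 2) by field.
  replace (2 * v / 2) with v by field.
  unfold cot. rewrite cos_2a, sin_2a, cos_plus, sin_plus, cos_PI2, sin_PI2.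
  field; lra.
Qed.

(* Iterating the duplication formula [m] times (Herglotz' trick). *)
Lemma cot_dyadic_sum m th : 0 < th < PI ->
  cot th = / INR (2 ^ m) * sumN (fun j => cot ((th + INR j * PI) / INR (2 ^ m))) (2 ^ m).
Proof.
  intros Hth. induction m as [|m IH].
  - simpl. rewrite Rinv_1. replace ((th + 0 * PI) / 1) with th by field. ring.
  - set (n := (2 ^ m)%nat) in *.
    assert (Hn : (2 ^ S m = n + n)%nat) by (unfold n; simpl; lia).
    assert (Hpos : 0 < INR n)
      by (apply lt_0_INR; unfold n; apply Nat.neq_0_lt_0, Nat.pow_nonzero; lia).
    rewrite Hn, sumN_split, <- sumN_plus, plus_INR. rewrite IH at 1.
    replace (/ (INR n + INR n)) with (/ INR n * / 2) by (field; lra).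
    rewrite Rmult_assoc. f_equal. rewrite <- sumN_scal. apply sumN_ext. intros j Hj.
    assert (INR j + 1 <= INR n) by (rewrite <- S_INR; apply le_INR; lia).
    assert (0 <= INR j) by apply pos_INR.
    rewrite (cot_double ((th + INR j * PI) / INR n)).
    2:{ split; [apply Rdiv_lt_0_compat; nra|].
        apply Rmult_lt_reg_r with (INR n); auto.
        unfold Rdiv; rewrite Rmult_assoc, Rinv_l by lra; nra. }
    rewrite plus_INR.
    replace ((th + INR j * PI) / INR n / 2) with ((th + INR j * PI) / (INR n + INR n))
      by (field; lra).
    replace (((th + INR j * PI) / INR n + PI) / 2)
      with ((th + (INR n + INR j) * PI) / (INR n + INR n)) by (field; lra).
    field.
Qed.

(* Term [j] and term [2 (q + 1) - j] form the pair [i = j - 1], by [PI]-periodicity. *)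
Lemma cot_dyadic_pairing q th :
  let n := INR (2 * S q) in
  sumN (fun j => cot ((th + INR j * PI) / n)) (2 * S q) =
  cot (th / n) + cot (th / n - PI / 2) +
  sumN (fun i => cot ((th + INR (S i) * PI) / n) + cot ((th - INR (S i) * PI) / n)) q.
Proof.
  intros n.
  assert (Hn : n = 2 * INR (S q)) by (unfold n; rewrite mult_INR; reflexivity).
  assert (0 < INR (S q)) by apply lt_0_INR, Nat.lt_0_succ.
  assert (Hrefl : forall i, (i <= q)%nat ->
     cot ((th + INR (S q + (S q - 1 - i)) * PI) / n) = cot ((th - INR (S i) * PI) / n)).
  { intros i Hi. rewrite <- (cot_add_PI ((th - INR (S i) * PI) / n)). f_equal.
    replace (INR (S q + (S q - 1 - i))) with (n - INR (S i))
      by (rewrite Hn, plus_INR, minus_INR, minus_INR, !S_INR by lia; simpl; ring).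
    field; lra. }
  replace (2 * S q)%nat with (S q + S q)%nat by lia.
  rewrite sumN_split, sumN_shift, sumN_plus,
    (sumN_rev (fun i => cot ((th + INR (S q + i) * PI) / n))).
  rewrite sumN_S, (Hrefl q), (sumN_ext _ _ q (fun i Hi => Hrefl i (Nat.lt_le_incl _ _ Hi))) by lia.
  replace ((th + INR 0 * PI) / n) with (th / n) by (simpl; field; lra).
  replace ((th - INR (S q) * PI) / n) with (th / n - PI / 2) by (rewrite Hn; field; lra).
  ring.
Qed.

(* The defect is [cot_defect ((k PI - th) / n) - cot_defect ((th + k PI) / n)]. *)
Lemma cot_pair_estimate th k n :
  0 < th <= PI / 2 -> 1 <= k -> 2 * k + 2 <= n ->
  Rabs (cot ((th + k * PI) / n) + cot ((th - k * PI) / n)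
        - n * (/ (th + k * PI) + / (th - k * PI))) <= 2 * th / n.
Proof.
  intros Hth Hk Hn. pose proof PI_RGT_0.
  assert (Hsplit : cot ((th + k * PI) / n) + cot ((th - k * PI) / n)
        - n * (/ (th + k * PI) + / (th - k * PI))
        = cot_defect ((k * PI - th) / n) - cot_defect ((th + k * PI) / n)).
  { unfold cot_defect.
    replace ((th - k * PI) / n) with (- ((k * PI - th) / n)) by (field; lra).
    unfold cot at 2; rewrite cos_neg, sin_neg, Rdiv_opp_r; fold (cot ((k * PI - th) / n)).
    field; split; nra. }
  rewrite Hsplit.
  assert (Hdiv : forall a, 0 < a <= n * PI / 2 -> 0 < a / n <= PI / 2).
  { intros a Ha. split; [apply Rdiv_lt_0_compat; lra|].
    apply Rmult_le_reg_r with n; [lra|].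
    unfold Rdiv; rewrite Rmult_assoc, Rinv_l by lra; lra. }
  eapply Rle_trans; [apply cot_defect_lipschitz; apply Hdiv; nra|].
  replace ((k * PI - th) / n - (th + k * PI) / n) with (- (2 * th / n)) by (field; lra).
  rewrite Rabs_Ropp, Rabs_right; [lra|].
  apply Rle_ge, Rdiv_le_0_compat; lra.
Qed.

Lemma sum_cot_pair_estimate q th : 0 < th <= PI / 2 ->
  let n := INR (2 * S q) in
  Rabs (sumN (fun i => cot ((th + INR (S i) * PI) / n) + cot ((th - INR (S i) * PI) / n)
                       - n * (/ (th + INR (S i) * PI) + / (th - INR (S i) * PI))) q)
  <= PI / 2.
Proof.
  intros Hth n. pose proof PI_RGT_0.
  assert (Hn : n = 2 * INR q + 2) by (unfold n; rewrite mult_INR, (S_INR q); simpl; ring).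
  assert (0 <= INR q) by apply pos_INR.
  eapply Rle_trans; [apply Rabs_sumN|].
  eapply Rle_trans.
  { apply (sumN_le _ (fun _ => 2 * th / n)). intros i Hi.
    assert (INR (S i) <= INR q) by (apply le_INR; lia).
    apply cot_pair_estimate; rewrite ?S_INR in *; pose proof (pos_INR i); lra. }
  rewrite sumN_const.
  apply Rmult_le_reg_r with n; [lra|].
  unfold Rdiv; rewrite !Rmult_assoc, Rinv_l by lra; nra.
Qed.

Lemma Rabs_cot_sub_PI2_le_1 w : 0 <= w <= PI / 4 -> Rabs (cot (w - PI / 2)) <= 1.
Proof.
  intros Hw. pose proof PI_RGT_0.
  rewrite cot_sub_PI2, Rabs_Ropp, <- tan_PI4.
  assert (0 <= tan w) by (rewrite <- tan_0; apply tan_incr_1; lra).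
  rewrite Rabs_right by lra; apply tan_incr_1; lra.
Qed.

Definition cot_partial_fraction (th : R) (q : nat) : R :=
  / th + sumN (fun i => / (th + INR (S i) * PI) + / (th - INR (S i) * PI)) q.

Lemma cot_partial_fraction_error m th : 0 < th <= PI / 2 ->
  Rabs (cot th - cot_partial_fraction th (2 ^ m - 1)) <= 5 / INR (2 ^ S m).
Proof.
  intros Hth. pose proof PI2_3_2. pose proof PI_le_334.
  set (q := (2 ^ m - 1)%nat).
  assert (Hq : (2 ^ S m = 2 * S q)%nat)
    by (unfold q; rewrite Nat.pow_succ_r'; pose proof (Nat.pow_nonzero 2 m); lia).
  rewrite Hq, (cot_dyadic_sum (S m) th), Hq, cot_dyadic_pairing by lra.
  set (n := INR (2 * S q)).
  assert (Hn : n = 2 * INR q + 2) by (unfold n; rewrite mult_INR, (S_INR q); simpl; ring).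
  assert (0 <= INR q) by apply pos_INR.
  set (d := fun i => cot ((th + INR (S i) * PI) / n) + cot ((th - INR (S i) * PI) / n)
                     - n * (/ (th + INR (S i) * PI) + / (th - INR (S i) * PI))).
  assert (Hd : Rabs (sumN d q) <= PI / 2) by exact (sum_cot_pair_estimate q th Hth).
  assert (Hw : 0 < th / n <= PI / 4).
  { split; [apply Rdiv_lt_0_compat; lra|].
    apply Rmult_le_reg_r with n; [lra|].
    unfold Rdiv; rewrite Rmult_assoc, Rinv_l by lra; nra. }
  pose proof (Rabs_cot_sub_PI2_le_1 (th / n) ltac:(lra)) as Htan.
  pose proof (cot_defect_bound _ Hw) as Hdef.
  replace (cot (th / n)) with (n / th - cot_defect (th / n)) by (unfold cot_defect; field; lra).
  unfold cot_partial_fraction.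
  rewrite (sumN_ext _ (fun i => n * (/ (th + INR (S i) * PI) + / (th - INR (S i) * PI)) + d i))
    by (intros i _; unfold d; cbv beta; ring).
  rewrite sumN_plus, sumN_scal.
  match goal with |- Rabs (/ n * (?a - ?b + ?c + (n * ?s + ?t)) - (/ th + ?s)) <= _ =>
    replace (/ n * (a - b + c + (n * s + t)) - (/ th + s)) with (/ n * (- b + c + t))
      by (field; lra) end.
  rewrite Rabs_mult, Rabs_right by (apply Rle_ge, Rlt_le, Rinv_0_lt_compat; lra).
  pose proof (Rabs_triang (- cot_defect (th / n) + cot (th / n - PI / 2)) (sumN d q)).
  pose proof (Rabs_triang (- cot_defect (th / n)) (cot (th / n - PI / 2))).
  rewrite Rabs_Ropp in *.
  rewrite (Rmult_comm (/ n)); apply Rmult_le_compat_r; [apply Rlt_le, Rinv_0_lt_compat|]; lra.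
Qed.

Definition tan_partial_fraction (t : R) (N : nat) : R :=
  sumN (fun k => 4 * t / ((2 * INR k + 1) ^ 2 - t ^ 2)) N.

(* With [th = PI (1 - t) / 2]: [PI / 2 / (th + i PI) = 1 / (2i + 1 - t)] and
   [PI / 2 / (th - i PI) = - 1 / (2i - 1 + t)], while the k-th term of
   [tan_partial_fraction] is [2 / (2k + 1 - t) - 2 / (2k + 1 + t)]. *)
Lemma cot_partial_fraction_shift t q : 0 <= t < 1 ->
  PI / 2 * cot_partial_fraction (PI * (1 - t) / 2) q
  = tan_partial_fraction t (S q) / 2 + / (2 * INR q + 1 + t).
Proof.
  intros Ht. pose proof PI_RGT_0.
  unfold cot_partial_fraction, tan_partial_fraction.
  set (th := PI * (1 - t) / 2).
  induction q as [|q IH].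
  - unfold th; simpl. field; repeat split; nra.
  - rewrite sumN_S.
    replace (PI / 2 * (/ th + (sumN (fun i => / (th + INR (S i) * PI) + / (th - INR (S i) * PI)) q
                               + (/ (th + INR (S q) * PI) + / (th - INR (S q) * PI)))))
      with (PI / 2 * (/ th + sumN (fun i => / (th + INR (S i) * PI) + / (th - INR (S i) * PI)) q)
            + PI / 2 * (/ (th + INR (S q) * PI) + / (th - INR (S q) * PI))) by ring.
    rewrite IH, (sumN_S _ (S q)). unfold th. rewrite !S_INR. pose proof (pos_INR q).
    field; repeat split; nra.
Qed.

Lemma tan_partial_fraction_dyadic_error t m : 0 <= t < 1 ->
  Rabs (PI * tan (PI * t / 2) - tan_partial_fraction t (2 ^ m)) <= 11 / INR (2 ^ m).
Proof.
  intros Ht. pose proof PI2_3_2. pose proof PI_le_334.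
  set (th := PI * (1 - t) / 2).
  assert (Hth : 0 < th <= PI / 2) by (unfold th; split; nra).
  pose proof (cot_partial_fraction_error m th Hth) as E.
  replace th with (PI / 2 - PI * t / 2) in E at 1 by (unfold th; field).
  rewrite cot_PI2_sub in E.
  set (q := (2 ^ m - 1)%nat) in E.
  assert (Hq : (2 ^ m = S q)%nat) by (unfold q; pose proof (Nat.pow_nonzero 2 m); lia).
  assert (H2 : INR (2 ^ S m) = 2 * (INR q + 1))
    by (rewrite Nat.pow_succ_r', mult_INR, Hq, (S_INR q); simpl; ring).
  rewrite H2 in E. rewrite Hq, S_INR.
  pose proof (cot_partial_fraction_shift t q Ht) as P. fold th in P.
  assert (0 <= INR q) by apply pos_INR.
  replace (PI * tan (PI * t / 2) - tan_partial_fraction t (S q))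
    with (PI * (tan (PI * t / 2) - cot_partial_fraction th q) + 2 / (2 * INR q + 1 + t))
    by (replace (tan_partial_fraction t (S q))
          with (2 * (PI / 2 * cot_partial_fraction th q) - 2 / (2 * INR q + 1 + t))
          by (rewrite P; field; lra);
        field; lra).
  eapply Rle_trans; [apply Rabs_triang|].
  rewrite Rabs_mult, (Rabs_right PI), (Rabs_right (2 / _))
    by (apply Rle_ge; try apply Rdiv_le_0_compat; lra).
  assert (Hz : 0 < / (INR q + 1)) by (apply Rinv_0_lt_compat; lra).
  assert (PI * Rabs (tan (PI * t / 2) - cot_partial_fraction th q) <= 9 / (INR q + 1)).
  { eapply Rle_trans; [apply Rmult_le_compat_l; [lra|apply E]|].
    unfold Rdiv; rewrite Rinv_mult.
    replace (PI * (5 * (/ 2 * / (INR q + 1)))) with (5 / 2 * PI * / (INR q + 1)) by (field; lra).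
    apply Rmult_le_compat_r; lra. }
  assert (2 / (2 * INR q + 1 + t) <= 2 / (INR q + 1))
    by (apply Rmult_le_compat_l; [lra|apply Rinv_le_contravar; lra]).
  unfold Rdiv in *; lra.
Qed.

(* Each term is bounded by the telescoping [1/k - 1/(k+1)]. *)
Lemma tan_partial_fraction_tail t N d : 0 <= t < 1 -> (1 <= N)%nat ->
  0 <= tan_partial_fraction t (N + d) - tan_partial_fraction t N <= / INR N - / INR (N + d).
Proof.
  intros Ht HN. induction d as [|d IH].
  - rewrite Nat.add_0_r. lra.
  - rewrite Nat.add_succ_r. unfold tan_partial_fraction in *. rewrite sumN_S, S_INR.
    set (k := INR (N + d)) in *.
    assert (Hk : 1 <= k) by (apply (le_INR 1); lia).
    assert ((2 * k + 1) ^ 2 - t ^ 2 >= 4 * k * (k + 1)) by nra.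
    assert (0 <= 4 * t / ((2 * k + 1) ^ 2 - t ^ 2)) by (apply Rdiv_le_0_compat; nra).
    assert (4 * t / ((2 * k + 1) ^ 2 - t ^ 2) <= / k - / (k + 1)).
    { replace (/ k - / (k + 1)) with (4 / (4 * k * (k + 1))) by (field; lra).
      apply Rmult_le_compat; [lra|left; apply Rinv_0_lt_compat; nra|lra|].
      apply Rinv_le_contravar; nra. }
    lra.
Qed.

(* Compare with the dyadic partial sum of a much larger index; the stretch in between
   is bounded by [tan_partial_fraction_tail]. *)
Lemma tan_partial_fraction_error t N : 0 <= t < 1 -> (1 <= N)%nat ->
  Rabs (PI * tan (PI * t / 2) - tan_partial_fraction t N) <= / INR N.
Proof.
  intros Ht HN. apply Rle_plus_epsilon. intros eps Heps.
  destruct (INR_unbounded (INR N + 11 / eps)) as [m Hm].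
  pose proof (Nat.pow_gt_lin_r 2 m ltac:(lia)) as Hpow.
  apply lt_INR in Hpow.
  assert (0 < 11 / eps) by (apply Rdiv_lt_0_compat; lra).
  pose proof (pos_INR N).
  assert (HNm : (N <= 2 ^ m)%nat) by (apply INR_le; lra).
  pose proof (tan_partial_fraction_dyadic_error t m Ht) as A.
  destruct (tan_partial_fraction_tail t N (2 ^ m - N) Ht HN) as [B1 B2].
  replace (N + (2 ^ m - N))%nat with (2 ^ m)%nat in B1, B2 by lia.
  assert (11 / INR (2 ^ m) <= eps).
  { assert (11 <= eps * INR (2 ^ m))
      by (replace 11 with (eps * (11 / eps)) by (field; lra); apply Rmult_le_compat_l; lra).
    apply Rmult_le_reg_r with (INR (2 ^ m)); [lra|].
    unfold Rdiv; rewrite Rmult_assoc, Rinv_l, Rmult_1_r by lra; lra. }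
  assert (0 < / INR (2 ^ m)) by (apply Rinv_0_lt_compat; lra).
  replace (PI * tan (PI * t / 2) - tan_partial_fraction t N) with
    ((PI * tan (PI * t / 2) - tan_partial_fraction t (2 ^ m))
     + (tan_partial_fraction t (2 ^ m) - tan_partial_fraction t N)) by ring.
  eapply Rle_trans; [apply Rabs_triang|].
  rewrite (Rabs_right (_ - tan_partial_fraction t N)) by lra. lra.
Qed.

Definition log_partial_sum (m : nat) (y : R) : R :=
  sum_f_R0 (fun j => y ^ (j + 1) / INR (j + 1)) m.

Definition ln_Pr (m : nat) (y : R) : R := ln (1 - y) + log_partial_sum m y.

Lemma Pr_exp_ln_Pr m y : y < 1 -> Pr (S m) y = exp (ln_Pr m y).
Proof.
  intros Hy. unfold Pr, ln_Pr, log_partial_sum.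
  rewrite Nat.sub_succ, Nat.sub_0_r, exp_plus, exp_ln by lra. reflexivity.
Qed.

Lemma is_derive_pow_succ_div n y : is_derive (fun y => y ^ S n / INR (S n)) y (y ^ n).
Proof.
  assert (INR (S n) <> 0) by (apply not_0_INR; lia).
  auto_derive; [auto|]. simpl pred. field; exact H.
Qed.

Lemma log_partial_sum_derive m y :
  is_derive (log_partial_sum m) y (sum_f_R0 (fun j => y ^ j) m).
Proof.
  induction m as [|m IH].
  - apply (is_derive_pow_succ_div 0).
  - apply (is_derive_plus (log_partial_sum m)); [exact IH|].
    rewrite Nat.add_1_r. apply is_derive_pow_succ_div.
Qed.

Lemma ln_Pr_derive m y : y < 1 -> is_derive (ln_Pr m) y (- y ^ S m / (1 - y)).
Proof.
  intros Hy.
  replace (- y ^ S m / (1 - y)) with (- / (1 - y) + sum_f_R0 (fun j => y ^ j) m).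
  - apply (is_derive_plus (fun y => ln (1 - y)) (log_partial_sum m)).
    + auto_derive; [lra|field; lra].
    + apply log_partial_sum_derive.
  - pose proof (GP_finite y m) as G. rewrite Nat.add_1_r in G.
    apply (Rmult_eq_reg_r (y - 1)); [|lra].
    rewrite Rmult_plus_distr_r, G. field; lra.
Qed.

(* [ln (Cfactor (m + 1) (x / 2) k)], see [Cfactor_exp_ln_Cfactor]. *)
Definition ln_Cfactor (m k : nat) (x : R) : R :=
  let n := 2 * INR k + 1 in
  (n / 2) ^ m * (ln_Pr m (x / n) + (-1) ^ m * ln_Pr m (- (x / n))).

Lemma odd_index_ratio k x : -1 < x < 1 -> -1 < x / (2 * INR k + 1) < 1.
Proof.
  intros Hx. pose proof (pos_INR k).
  split; [apply Rlt_div_r|apply Rlt_div_l]; lra.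
Qed.

Lemma Cfactor_exp_ln_Cfactor m k x : -1 < x < 1 ->
  Cfactor (S m) (x / 2) k = exp (ln_Cfactor m k x).
Proof.
  intros Hx. pose proof (odd_index_ratio k x Hx). pose proof (pos_INR k).
  unfold Cfactor, ln_Cfactor, Rpower; cbv zeta.
  replace (INR (2 * k + 1)) with (2 * INR k + 1) by (rewrite plus_INR, mult_INR; reflexivity).
  set (n := 2 * INR k + 1) in *.
  replace (x / 2 / (n / 2)) with (x / n) by (unfold n; field; lra).
  rewrite Nat.sub_succ, Nat.sub_0_r, !Pr_exp_ln_Pr, ln_mult, !ln_exp by (try apply exp_pos; lra).
  reflexivity.
Qed.

Lemma ln_Cfactor_derive m k x : -1 < x < 1 ->
  is_derive (ln_Cfactor m k) x
    (- (x ^ m / 2 ^ S m) * (4 * x / ((2 * INR k + 1) ^ 2 - x ^ 2))).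
Proof.
  intros Hx. pose proof (odd_index_ratio k x Hx) as Hy. pose proof (pos_INR k).
  unfold ln_Cfactor. set (n := 2 * INR k + 1) in *.
  assert (D1 := ln_Pr_derive m (x / n) ltac:(lra)).
  assert (D2 := ln_Pr_derive m (- (x / n)) ltac:(lra)).
  auto_derive.
  - split; [exists (- (x / n) ^ S m / (1 - x / n)); exact D1|].
    split; [exists (- (- (x / n)) ^ S m / (1 - - (x / n))); exact D2|]. easy.
  - replace (Derive (fun y => ln_Pr m y) (x * / n)) with (- (x / n) ^ S m / (1 - x / n))
      by (symmetry; apply is_derive_unique, D1).
    replace (Derive (fun y => ln_Pr m y) (- (x * / n)))
      with (- (- (x / n)) ^ S m / (1 - - (x / n)))
      by (symmetry; apply is_derive_unique, D2).
    unfold Rdiv. set (y := x * / n).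
    assert (Hy' : -1 < y < 1) by exact Hy.
    assert (Hn : 0 < n) by (unfold n; lra).
    assert (Hsign : (-1) ^ m * (-1) ^ m = 1)
      by (rewrite <- Rpow_mult_distr; replace (-1 * -1) with 1 by ring; apply pow1).
    replace (- y) with (-1 * y) by ring.
    replace x with (n * y) by (unfold y; field; lra).
    rewrite !Rpow_mult_distr, <- !tech_pow_Rmult, pow_inv.
    replace ((-1) ^ m * (- (1 * / n) * (- (-1 * (-1) ^ m * (y * y ^ m)) * / (1 - -1 * y))))
      with (- ((-1) ^ m * (-1) ^ m) * (y * y ^ m) / (n * (1 + y))) by (field; lra).
    rewrite Hsign.
    assert (n ^ m <> 0) by (apply pow_nonzero; lra).
    assert (2 ^ m <> 0) by (apply pow_nonzero; lra).
    assert (0 < n * n * (1 - y * y)) by (apply Rmult_lt_0_compat; nra).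
    field; repeat split; lra.
Qed.

Lemma ln_Cfactor_0 m k : ln_Cfactor m k 0 = 0.
Proof.
  unfold ln_Cfactor, ln_Pr, log_partial_sum; cbv zeta.
  rewrite Rdiv_0_l, Ropp_0, Rminus_0_r, ln_1.
  rewrite (sum_eq _ (fun _ => 0)), sum_cte by (intros j _; rewrite pow_i by lia; apply Rdiv_0_l).
  ring.
Qed.

Lemma is_RInt_ln_Cfactor m k x : 0 <= x < 1 ->
  is_RInt (fun t => - (t ^ m / 2 ^ S m) * (4 * t / ((2 * INR k + 1) ^ 2 - t ^ 2))) 0 x
    (ln_Cfactor m k x).
Proof.
  intros Hx. pose proof (pos_INR k).
  replace (ln_Cfactor m k x) with (minus (ln_Cfactor m k x) (ln_Cfactor m k 0))
    by (rewrite ln_Cfactor_0; unfold minus, plus, opp; simpl; ring).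
  apply (is_RInt_derive (ln_Cfactor m k)); intros t Ht; rewrite Rmin_left, Rmax_right in Ht by lra.
  - apply ln_Cfactor_derive; lra.
  - apply (ex_derive_continuous
      (fun t => - (t ^ m / 2 ^ S m) * (4 * t / ((2 * INR k + 1) ^ 2 - t ^ 2)))).
    auto_derive. nra.
Qed.

Lemma Cpartial_exp_sum m x N : -1 < x < 1 ->
  Cpartial (S m) (x / 2) N = exp (sumN (fun k => ln_Cfactor m k x) N).
Proof.
  intros Hx. induction N as [|N IH]; simpl; [rewrite exp_0; reflexivity|].
  rewrite IH, Cfactor_exp_ln_Cfactor, exp_plus by exact Hx. reflexivity.
Qed.

Lemma is_RInt_sum_ln_Cfactor m x N : 0 <= x < 1 ->
  is_RInt (fun t => - (t ^ m / 2 ^ S m) * tan_partial_fraction t N) 0 x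
    (sumN (fun k => ln_Cfactor m k x) N).
Proof.
  intros Hx.
  apply (is_RInt_ext (fun t => sumN (fun k =>
           - (t ^ m / 2 ^ S m) * (4 * t / ((2 * INR k + 1) ^ 2 - t ^ 2))) N)).
  - intros t _. apply sumN_scal.
  - apply is_RInt_sumN. intros k _. apply is_RInt_ln_Cfactor, Hx.
Qed.

Lemma ex_RInt_tan_integrand m x : 0 <= x < 1 ->
  ex_RInt (fun t => PI * t ^ m * tan (PI * t / 2)) 0 x.
Proof.
  intros Hx. pose proof PI_RGT_0.
  apply (ex_RInt_continuous (fun t => PI * t ^ m * tan (PI * t / 2))).
  intros t Ht. rewrite Rmin_left, Rmax_right in Ht by lra.
  apply (ex_derive_continuous (fun t => PI * t ^ m * tan (PI * t / 2))).
  unfold tan; auto_derive.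
  assert (0 < cos (PI * t / 2)) by (apply cos_gt_0; nra). lra.
Qed.

Lemma tan_integrand_partial_fraction_error m N t : (1 <= N)%nat -> 0 <= t < 1 ->
  Rabs (- (t ^ m / 2 ^ S m) * tan_partial_fraction t N
        - - / 2 ^ S m * (PI * t ^ m * tan (PI * t / 2))) <= 1 / INR N.
Proof.
  intros HN Ht.
  assert (H2 : 0 < 2 ^ S m) by (apply pow_lt; lra).
  replace (- (t ^ m / 2 ^ S m) * tan_partial_fraction t N
           - - / 2 ^ S m * (PI * t ^ m * tan (PI * t / 2)))
    with (t ^ m / 2 ^ S m * (PI * tan (PI * t / 2) - tan_partial_fraction t N))
    by (field; lra).
  assert (0 <= t ^ m <= 1) by (rewrite <- (pow1 m); split; [apply pow_le|apply pow_incr]; lra).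
  assert (/ 2 ^ S m <= 1) by (rewrite <- Rinv_1; apply Rinv_le_contravar, pow_R1_Rle; lra).
  rewrite Rabs_mult, Rabs_right by (apply Rle_ge, Rdiv_le_0_compat; lra).
  rewrite Rdiv_1_l.
  rewrite <- (Rmult_1_l (/ INR N)).
  apply Rmult_le_compat; [apply Rdiv_le_0_compat; lra|apply Rabs_pos| |
    apply tan_partial_fraction_error; [exact Ht|exact HN]].
  unfold Rdiv; nra.
Qed.

Lemma is_lim_seq_sum_ln_Cfactor m x : 0 <= x < 1 ->
  is_lim_seq (fun N => sumN (fun k => ln_Cfactor m k x) N)
    (- / 2 ^ S m * RInt (fun t => PI * t ^ m * tan (PI * t / 2)) 0 x).
Proof.
  intros Hx. pose proof (ex_RInt_tan_integrand m x Hx) as Hg.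
  replace (- / 2 ^ S m * RInt (fun t => PI * t ^ m * tan (PI * t / 2)) 0 x)
    with (RInt (fun t => - / 2 ^ S m * (PI * t ^ m * tan (PI * t / 2))) 0 x)
    by exact (RInt_scal _ 0 x _ Hg).
  apply (is_lim_seq_RInt_uniform (fun N t => - (t ^ m / 2 ^ S m) * tan_partial_fraction t N)
           _ _ 0 x 1).
  - lra.
  - exact (ex_RInt_scal _ _ _ _ Hg).
  - intros N. apply is_RInt_sum_ln_Cfactor, Hx.
  - intros N t HN Ht. apply tan_integrand_partial_fraction_error; [exact HN|lra].
Qed.

Theorem proposition3p3 (r : nat) (x : R) :
  (2 <= r)%nat -> 0 <= x < 1 ->
  ln (Ccos r (x / 2)) =
  - / 2 ^ r * RInt (fun t => PI * t ^ (r - 1) * tan (PI * t / 2)) 0 x.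
Proof.
  intros Hr Hx. destruct r as [|m]; [lia|]. rewrite Nat.sub_succ, Nat.sub_0_r.
  set (L := - / 2 ^ S m * RInt (fun t => PI * t ^ m * tan (PI * t / 2)) 0 x).
  assert (HC : is_lim_seq (Cpartial (S m) (x / 2)) (exp L)).
  { apply (is_lim_seq_ext (fun N => exp (sumN (fun k => ln_Cfactor m k x) N))).
    - intros N. symmetry; apply Cpartial_exp_sum; lra.
    - apply (is_lim_seq_continuous exp); [apply derivable_continuous_pt, derivable_pt_exp|].
      apply is_lim_seq_sum_ln_Cfactor, Hx. }
  unfold Ccos. rewrite (is_lim_seq_unique _ _ HC). apply ln_exp.
Qed.
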